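(* Let $F$ be an infinite field and let $n\geq 2$ be an integer. If $p\in F[x]$ is a nonconstant polynomial, then there exist matrices $A,B\in \mathrm{M}_n(F)$ such that $p(AB)-p(BA)$ is algebraic of degree $n$ over $F$.
   Context: An element $a$ of a ring with center $Z$ is algebraic of degree $n$ over $Z$ if there is a polynomial $f\in Z[x]$ of degree $n$ with $f(a)=0$ and no nonzero polynomial of smaller degree in $Z[x]$ annihilates $a$. *)

From HB Require Import structures.
From mathcomp Require Import all_boot all_order all_algebra.
Set Implicit Arguments. Unset Strict Implicit. Unset Printing Implicit Defensive.
Import GRing.Theory.
Local Open Scope ring_scope.

Definition central (R : nzRingType) (z : R) : Prop := forall y : R, z * y = y * z.

(* a polynomial over R whose coefficients all lie in the center Z of R,
   i.e. an element of Z[x] *)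
Definition central_poly (R : nzRingType) (f : {poly R}) : Prop :=
  forall i, central f`_i.

(* a is algebraic of degree n over the center Z of R: some f in Z[x] of
   degree n (size n.+1) annihilates a, and no nonzero g in Z[x] of degree
   < n annihilates a. *)
Definition algebraic_of_degree (R : nzRingType) (a : R) (n : nat) : Prop :=
  (exists f : {poly R}, [/\ central_poly f, size f = n.+1 & f.[a] = 0]) /\
  (forall g : {poly R}, central_poly g -> g != 0 -> (size g <= n)%N ->
     g.[a] != 0).

From HB Require Import structures.
From mathcomp Require Import all_boot all_order all_algebra.
From mathcomp Require Import ring.
Set Implicit Arguments. Unset Strict Implicit. Unset Printing Implicit Defensive.
Import GRing.Theory.
Local Open Scope ring_scope.

(* Take X diagonal with entries x_i whose values q_i = p(x_i) are distinct
   (possible as F is infinite), A invertible and B = A^-1 X.  Then AB = X and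
   BA = A^-1 X A, so p(AB) - p(BA) = Q - A^-1 Q A with Q = p(X) = diag(q_i).
   The matrix Q - L, where L is the nilpotent shift, is lower triangular with
   the distinct q_i on its diagonal, hence conjugate to Q by an explicit lower
   unitriangular A.  For that A the difference is L, which is algebraic of
   degree n over the center (the scalar matrices): L^n = 0 while a nonzero
   polynomial of smaller degree applied to L has a nonzero first column. *)

Lemma sum_mul_natr_eq (R : nzSemiRingType) n (G : nat -> R) t :
  \sum_(k < n) G k * (k == t :> nat)%:R = (t < n)%:R * G t.
Proof.
under eq_bigr do rewrite mulr_natr mulrb.
rewrite -big_mkcond big_ord1_eq.
by case: ifP; rewrite ?mul1r ?mul0r.
Qed.

Section CentralMatrix.
Variable R : nzRingType.

Lemma mul_mx_deltaE m n (A : 'M[R]_m) a (b : 'I_n) :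
  A *m delta_mx a b = \matrix_(i, j) (A i a * (j == b)%:R).
Proof.
apply/matrixP => i j; rewrite !mxE (bigD1 a) //= mxE eqxx /=.
rewrite big1 ?addr0 // => k hk.
by rewrite mxE (negbTE hk) mulr0.
Qed.

Lemma mul_delta_mxE m n (A : 'M[R]_m) (a : 'I_n) b :
  delta_mx a b *m A = \matrix_(i, j) ((i == a)%:R * A b j).
Proof.
apply/matrixP => i j; rewrite !mxE (bigD1 b) //= mxE eqxx andbT.
rewrite big1 ?addr0 // => k hk.
by rewrite mxE (negbTE hk) andbF mul0r.
Qed.

Lemma central_mx_scalar m (z : 'M[R]_m.+1) :
  central z -> z = (z 0 0)%:M.
Proof.
move=> zC; apply/matrixP => i j; rewrite mxE.
have /matrixP/(_ i j) := zC (delta_mx j j).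
rewrite -!mulmxE mul_mx_deltaE mul_delta_mxE !mxE eqxx mulr1 => ->.
have /matrixP/(_ 0 j) := zC (delta_mx 0 j).
rewrite -!mulmxE mul_mx_deltaE mul_delta_mxE !mxE !eqxx mulr1 mul1r => ->.
by case: eqP; rewrite ?mul1r ?mul0r.
Qed.

End CentralMatrix.

Section ShiftMatrix.
Variables (R : nzRingType) (m : nat).

Definition shift_mx : 'M[R]_m.+1 := \matrix_(i, j) (i == j.+1 :> nat)%:R.

Lemma shift_mx_expE k i j : (shift_mx ^+ k) i j = (i == (j + k)%N :> nat)%:R.
Proof.
elim: k i j => [|k IHk] i j; first by rewrite expr0 mxE addn0.
rewrite exprSr -mulmxE mxE.
under eq_bigr do rewrite IHk mxE.
rewrite (sum_mul_natr_eq _ (fun l => (i == (l + k)%N :> nat)%:R)) addSnnS.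
case: ltnP => [_|jm]; first by rewrite mul1r.
suff /negbTE -> : (i != (j + k.+1)%N :> nat) by rewrite mul0r.
rewrite neq_ltn (leq_trans (ltn_ord i)) // (leq_trans jm) //.
by rewrite addnS ltnS leq_addr.
Qed.

Lemma shift_mx_nilpotent : shift_mx ^+ m.+1 = 0.
Proof.
apply/matrixP => i j; rewrite shift_mx_expE mxE.
by rewrite ltn_eqF // (leq_trans (ltn_ord i)) ?leq_addl.
Qed.

Lemma horner_shift_mx_col0 (g : {poly 'M[R]_m.+1}) k :
  central_poly g -> g.[shift_mx] k 0 = g`_k 0 0.
Proof.
move=> gC; rewrite horner_coef summxE.
under eq_bigr => i _ do rewrite [g`_i]central_mx_scalar // -mulmxE
  mul_scalar_mx mxE shift_mx_expE add0n eq_sym.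
rewrite (sum_mul_natr_eq _ (fun i => g`_i 0 0)).
by case: ltnP => [_|gk]; rewrite ?mul1r // mul0r nth_default ?mxE.
Qed.

Lemma shift_mx_algebraic : algebraic_of_degree shift_mx m.+1.
Proof.
split.
  exists 'X^(m.+1); split; last by rewrite hornerXn shift_mx_nilpotent.
  - by move=> i y; rewrite coefXn (commr_nat y).
  - by rewrite size_polyXn.
move=> g gC g0 gm.
have gk : ((size g).-1 < m.+1)%N by rewrite prednK ?size_poly_gt0.
apply: contra g0 => /eqP gL0.
rewrite -lead_coef_eq0 [lead_coef g]central_mx_scalar; last exact: gC.
have := horner_shift_mx_col0 (Ordinal gk) gC.
by rewrite gL0 mxE /= -lead_coefE => <-; rewrite raddf0.
Qed.

End ShiftMatrix.

Section ShiftConjugation.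
Variables (F : fieldType) (m : nat) (qs : seq F).
Hypotheses (qs_size : size qs = m.+1) (qs_uniq : uniq qs).

Definition diag_seq_mx : 'M[F]_m.+1 := diag_mx (\row_i qs`_i).

(* Entrywise, A (Q - L) = Q A says A i j * (q_j - q_i) = A i j.+1
   and these products solve it with A i i = 1. *)
Definition shift_conj_coef (i j : nat) : F :=
  if (j <= i)%N then \prod_(j <= k < i) (qs`_k - qs`_i)^-1 else 0.

Definition shift_conj_mx : 'M[F]_m.+1 := \matrix_(i, j) shift_conj_coef i j.

Lemma shift_conj_coef_gt i j : (i < j)%N -> shift_conj_coef i j = 0.
Proof. by rewrite /shift_conj_coef ltnNge => /negbTE ->. Qed.

Lemma shift_conj_coefS i j : (i < m.+1)%N ->
  shift_conj_coef i j * (qs`_j - qs`_i) = shift_conj_coef i j.+1.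
Proof.
move=> im; case: (ltngtP j i) => [ji|ij|->]; last first.
- by rewrite [RHS]shift_conj_coef_gt // subrr mulr0.
- by rewrite !shift_conj_coef_gt ?mul0r // ltnW.
have qji : qs`_j - qs`_i != 0.
  by rewrite subr_eq0 nth_uniq ?qs_size ?(ltn_trans ji) // ltn_eqF.
by rewrite /shift_conj_coef ji ltnW // big_ltn // mulrAC mulVf // mul1r.
Qed.

Lemma shift_conj_mx_unit : shift_conj_mx \in unitmx.
Proof.
rewrite unitmxE det_trig; last first.
  by apply/is_trig_mxP => i j ij; rewrite mxE shift_conj_coef_gt.
by rewrite big1 ?unitr1 // => i _; rewrite mxE /shift_conj_coef leqnn big_geq.
Qed.

Lemma shift_conj_mxP :
  shift_conj_mx *m (diag_seq_mx - shift_mx F m) = diag_seq_mx *m shift_conj_mx.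
Proof.
apply/matrixP => i j.
rewrite mulmxBr mul_mx_diag mul_diag_mx !mxE.
under eq_bigr do rewrite !mxE.
rewrite (sum_mul_natr_eq _ (shift_conj_coef i)).
have -> : (j.+1 < m.+1)%:R * shift_conj_coef i j.+1 = shift_conj_coef i j.+1.
  case: ltnP => [_|mj]; first by rewrite mul1r.
  by rewrite shift_conj_coef_gt ?mulr0 // (leq_trans (ltn_ord i)).
rewrite -shift_conj_coefS //; ring.
Qed.

End ShiftConjugation.

Section InfiniteField.
Variable F : fieldType.
Hypothesis F_infinite : forall s : seq F, exists x : F, x \notin s.

Lemma exists_uniq_seq k : exists s : seq F, uniq s /\ size s = k.
Proof.
elim: k => [|k [s [s_uniq s_size]]]; first by exists [::].
have [x xNs] := F_infinite s.
by exists (x :: s); rewrite /= xNs s_uniq s_size.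
Qed.

Lemma exists_nonroot (r : {poly F}) : r != 0 -> exists x, ~~ root r x.
Proof.
move=> r0; have [s [s_uniq s_size]] := exists_uniq_seq (size r).
have /allPn[x _ rx] : ~~ all (root r) s.
  by apply/negP => rs; have := max_poly_roots r0 rs s_uniq; rewrite s_size ltnn.
by exists x.
Qed.

Lemma exists_horner_notin (p : {poly F}) (s : seq F) :
  (1 < size p)%N -> exists x, p.[x] \notin s.
Proof.
move=> p_nonconst; pose r := \prod_(v <- s) (p - v%:P).
have r0 : r != 0.
  rewrite prodf_seq_neq0; apply/allP => v _ /=.
  rewrite -size_poly_eq0 size_addl ?size_opp ?size_polyC.
    by rewrite -lt0n (ltn_trans _ p_nonconst).
  exact: leq_ltn_trans (leq_b1 _) p_nonconst.
have [x rx] := exists_nonroot r0; exists x; apply: contra rx => pxs.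
rewrite /root horner_prod prodf_seq_eq0.
by apply/hasP; exists p.[x] => //; rewrite !hornerE subrr.
Qed.

Lemma exists_injective_horner (p : {poly F}) k :
  (1 < size p)%N -> exists xs : seq F, size xs = k /\ uniq (map (horner p) xs).
Proof.
move=> p_nonconst.
elim: k => [|k [xs [xs_size pxs_uniq]]]; first by exists [::].
have [x px] := exists_horner_notin (map (horner p) xs) p_nonconst.
by exists (x :: xs); rewrite /= px pxs_uniq xs_size.
Qed.

End InfiniteField.

Theorem lemma2p8 (F : fieldType)
  (F_infinite : forall s : seq F, exists x : F, x \notin s)
  (n : nat) (hn : (2 <= n)%N) (p : {poly F}) (hp : (1 < size p)%N) :
  exists A B : 'M[F]_n.-1.+1,
    algebraic_of_degree (horner_mx (A *m B) p - horner_mx (B *m A) p) n.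
Proof.
case: n hn => // m _ /=.
have [xs [xs_size pxs_uniq]] := exists_injective_horner F_infinite m.+1 hp.
set qs := map (horner p) xs.
have qs_size : size qs = m.+1 by rewrite size_map.
pose X := diag_mx (\row_(i < m.+1) xs`_i).
pose A := shift_conj_mx m qs.
have A_unit : A \in unitmx := shift_conj_mx_unit m qs.
have pX : horner_mx X p = diag_seq_mx m qs.
  rewrite horner_mx_diag; congr diag_mx; apply/matrixP => i j.
  by rewrite !mxE (nth_map 0) ?xs_size.
have pBA : invmx A *m horner_mx X p *m A = diag_seq_mx m qs - shift_mx F m.
  by rewrite pX -mulmxA -shift_conj_mxP // mulKmx.
exists A, (invmx A *m X).
rewrite mulmxA mulmxV // mul1mx horner_mx_uconjC // pBA pX subKr.
exact: shift_mx_algebraic.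
Qed.
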